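(* Assume the well-posedness and controllability assumptions below. For $\theta\in\mathcal{N}$ define $\ell_N(\theta):=\mathbb{E}\big[\ell(x_s^{\mathrm{bet}(\theta_{N-1})},\bar u_s^{\mathrm{bet}(\theta_{N-1}),\theta_N},\theta_N)\mid\theta_0=\theta\big]$, and for the closed-loop system $x_{k+1}=f(x_k,\kappa_N(x_k,\theta_k),\theta_k)$ define $\mathcal{L}V_N^\star(x_k,\theta_k):=\mathbb{E}[V_N^\star(x_{k+1},\theta_{k+1})-V_N^\star(x_k,\theta_k)\mid\mathfrak{F}_k]$. Then for all $(x_k,\theta_k)\in X_N$, $$\mathcal{L}V_N^\star(x_k,\theta_k)\le \ell_N(\theta_k)-\ell(x_k,\kappa_N(x_k,\theta_k),\theta_k).$$
   Context: Let $\mathcal{N}=\{1,\dots,\nu\}$ and let $\{\theta_k\}_{k\ge 0}$ be a time-homogeneous Markov chain on $\mathcal{N}$ with transition matrix $P=(p_{ij})$ and initial distribution $v$, defined on a filtered probability space $(\Omega,\mathfrak{F},\{\mathfrak{F}_k\}_k,\mathbb{P})$, where $\mathfrak{F}_k$ is the $\sigma$-algebra generated by the history of states, inputs and modes up to time $k$. The system is $x_{k+1}=f(x_k,u_k,\theta_k)$ with $x_k\in\mathbb{R}^n$, $u_k\in\mathbb{R}^m$; at time $k$ both $x_k$ and $\theta_k$ are measured. Constraints: $(x_k,u_k)\in Y_{\theta_k}$. Stage cost $\ell:\mathbb{R}^n\times\mathbb{R}^m\times\mathcal{N}\to\mathbb{R}$. $u\lhd\mathfrak{F}_k$ means $u$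 is $\mathfrak{F}_k$-measurable. Cover: $\mathcal{C}(i)=\{j: p_{ij}>0\}$; bet node: some $\mathrm{bet}(i)\in\mathcal{C}(i)$ with $p_{i\,\mathrm{bet}(i)}\ge p_{ij}$ for all $j\in\mathcal{C}(i)$. Well-posedness assumption: for each $\theta$, $\ell(\cdot,\cdot,\theta)$ is nonnegative, lower semicontinuous and level-bounded in $u$ locally uniformly in $x$; $f(\cdot,\cdot,\theta)$ is continuous; $Y_\theta$ is nonempty and compact; $\{\theta_k\}$ is irreducible and aperiodic. Optimal steady states: $(x_s^\theta,u_s^\theta)$ minimizes $\ell(x,u,\theta)$ subject to $f(x,u,\theta)=x$, $(x,u)\in Y_\theta$. Controllability assumption: for all $i,j\in\mathcal{N}$ there is $\bar u_s^{i,j}$ with $(x_s^i,\bar u_s^{i,j})\in Y_j$ and $f(x_s^i,\bar u_s^{i,j},j)=x_s^{\mathrm{bet}(j)}$. EMPC problem $\mathbb{P}(x,\theta)$: $V_N^\star(x,\theta)=\inf_{\mathbf{u}_N}\mathbb{E}[\sum_{j=0}^{N-1}\ell(x_j,u_j,\theta_j)\mid\mathfrak{F}_0]$ subject to, for $k=0,\dots,N-1$: $x_{k+1}=f(x_k,u_k,\theta_k)$, $(x_k,u_k)\in Y_{\theta_k}$, $(x_0,\theta_0)=(x,\theta)$, $x_N=x_s^{\mathrm{bet}(\theta_{N-1})}$, $u_k\lhd\mathfrak{F}_k$. $X_N$ is the set of $(x,\theta)$ for which it is feasible; $\kappa_N(x,\theta)=u_0^\star(x,\theta)$ is the first element of an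 optimal policy. *)

From HB Require Import structures.
From mathcomp Require Import all_boot all_order all_algebra.
From mathcomp Require Import all_classical all_reals all_analysis.
Set Implicit Arguments. Unset Strict Implicit. Unset Printing Implicit Defensive.
Import Order.TTheory GRing.Theory Num.Theory.
Import numFieldNormedType.Exports.
Local Open Scope classical_set_scope.
Local Open Scope ring_scope.

Section EMPC.
Variables (R : realType) (n m nu : nat).
Notation X := 'rV[R]_n.
Notation U := 'rV[R]_m.
Notation M := 'I_nu.

Definition stochastic (P : 'M[R]_nu) : Prop :=
  (forall i j, 0 <= P i j) /\ (forall i, \sum_j P i j = 1).

Definition irreducible (P : 'M[R]_nu) : Prop :=
  forall i j, exists k : nat, 0 < (P ^+ k) i j.

Definition aperiodic (P : 'M[R]_nu) : Prop :=
  forall (i : M) (d : nat),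
    (forall k : nat, (0 < k)%N -> 0 < (P ^+ k) i i -> (d %| k)%N) -> d = 1%N.

Definition is_bet (P : 'M[R]_nu) (bet : M -> M) : Prop :=
  forall i, 0 < P i (bet i) /\ forall j, 0 < P i j -> P i j <= P i (bet i).

(* level-bounded in u locally uniformly in x (Rockafellar-Wets Def. 1.16) *)
Definition level_bounded_loc_unif (g : X -> U -> R) : Prop :=
  forall (xb : X) (a : R), exists2 V : set X, nbhs xb V &
    exists2 B : set U, bounded_set B &
      forall x u, V x -> g x u <= a -> B u.

Definition well_posed (P : 'M[R]_nu) (f : X -> U -> M -> X)
    (l : X -> U -> M -> R) (Y : M -> set (X * U)) : Prop :=
  [/\ forall th,
        [/\ forall x u, 0 <= l x u th,
            lower_semicontinuous (fun p : X * U => (l p.1 p.2 th)%:E),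
            level_bounded_loc_unif (fun x u => l x u th),
            continuous (fun p : X * U => f p.1 p.2 th) &
            Y th !=set0 /\ compact (Y th)],
      irreducible P & aperiodic P].

Definition optimal_steady_states (f : X -> U -> M -> X) (l : X -> U -> M -> R)
    (Y : M -> set (X * U)) (xs : M -> X) (us : M -> U) : Prop :=
  forall th,
    [/\ f (xs th) (us th) th = xs th, Y th (xs th, us th) &
        forall x u, f x u th = x -> Y th (x, u) -> l (xs th) (us th) th <= l x u th].

Definition controllable (f : X -> U -> M -> X) (Y : M -> set (X * U))
    (bet : M -> M) (xs : M -> X) (ubar : M -> M -> U) : Prop :=
  forall i j, Y j (xs i, ubar i j) /\ f (xs i) (ubar i j) j = xs (bet j).

(* A causal (F_k-adapted) policy: the input at time k is a function of the
   mode history [:: th_0; ...; th_k] (the state x_k being determined by the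
   initial state and this history). *)
Definition policy := seq M -> U.

(* State reached from x after applying policy u along the mode history h,
   pre being the part of the history already elapsed. *)
Fixpoint stt (f : X -> U -> M -> X) (u : policy) (pre : seq M) (x : X)
    (h : seq M) : X :=
  match h with
  | [::] => x
  | th :: h' => stt f u (rcons pre th) (f x (u (rcons pre th)) th) h'
  end.

(* x_k along the full mode path h = [:: th_0; ...] *)
Definition xk f (u : policy) (x : X) (h : seq M) (k : nat) : X :=
  stt f u [::] x (take k h).
Definition uk (u : policy) (h : seq M) (k : nat) : U := u (take k.+1 h).

(* probability of the mode path th_1 ... th_r given th_0 = i *)
Fixpoint pathprob (P : 'M[R]_nu) (i : M) (s : seq M) : R :=
  match s with
  | [::] => 1
  | j :: s' => P i j * pathprob P j s'
  end.

(* Feasibility for P(x,th): constraints hold almost surely, i.e. along every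
   mode path th_0 = th, th_1, ..., th_{N-1} of positive probability. *)
Definition feasible (N : nat) P f (Y : M -> set (X * U)) (bet : M -> M)
    (xs : M -> X) (x : X) (th : M) (u : policy) : Prop :=
  forall t : (N.-1).-tuple M, 0 < pathprob P th t ->
    let h := th :: tval t in
    (forall k, (k < N)%N -> Y (nth th h k) (xk f u x h k, uk u h k)) /\
    xk f u x h N = xs (bet (last th t)).

Definition cost (N : nat) P f l (x : X) (th : M) (u : policy) : R :=
  \sum_(t : (N.-1).-tuple M)
     pathprob P th t *
       (let h := th :: tval t in
        \sum_(k < N) l (xk f u x h k) (uk u h k) (nth th h k)).

Definition VN (N : nat) P f l Y bet xs (x : X) (th : M) : R :=
  inf [set cost N P f l x th u | u in feasible N P f Y bet xs x th].

Definition XN (N : nat) P f (Y : M -> set (X * U)) bet xs : set (X * M) :=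
  [set p | exists u, feasible N P f Y bet xs p.1 p.2 u].

Definition is_mpc_law (N : nat) P f l Y bet xs (kappa : X -> M -> U) : Prop :=
  forall x th, XN N P f Y bet xs (x, th) ->
    exists u, [/\ feasible N P f Y bet xs x th u,
                 cost N P f l x th u = VN N P f l Y bet xs x th &
                 kappa x th = u [:: th]].

Definition lN (N : nat) (P : 'M[R]_nu) l (bet : M -> M) (xs : M -> X)
    (ubar : M -> M -> U) (th : M) : R :=
  \sum_(a : M) \sum_(b : M)
     (P ^+ N.-1) th a * P a b * l (xs (bet a)) (ubar (bet a) b) b.

Definition LVN (N : nat) (P : 'M[R]_nu) (f : X -> U -> M -> X) (l : X -> U -> M -> R) (Y : M -> set (X * U)) (bet : M -> M) (xs : M -> X) (kappa : X -> M -> U) (x : X) (th : M) : R :=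
  \sum_(j : M) P th j *
     (VN N P f l Y bet xs (f x (kappa x th) th) j - VN N P f l Y bet xs x th).

End EMPC.

From HB Require Import structures.
From mathcomp Require Import all_boot all_order all_algebra.
From mathcomp Require Import all_classical all_reals all_analysis.
From mathcomp Require Import lra.
Import Order.TTheory GRing.Theory Num.Theory.
Local Open Scope classical_set_scope.
Local Open Scope ring_scope.
Set Implicit Arguments. Unset Strict Implicit. Unset Printing Implicit Defensive.

(* Shift the optimal policy u of (x, θ) by one step and complete it at time N by the
   input ubar (bet θ_{N-1}) θ_N, which by controllability moves the terminal state
   x_s^{bet θ_{N-1}} to x_s^{bet θ_N}.  The shifted policy is therefore feasible from
   every successor (f(x, κ(x,θ), θ), j) of positive probability, so V_N^*(x⁺, j) is at
   most its cost; averaged over j, that cost is V_N^*(x, θ) minus the first stage cost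
   ℓ(x, κ(x,θ), θ) plus the expected cost ℓ_N(θ) of the appended stage. *)

Section PathExpectation.
Variables (R : realType) (nu : nat) (P : 'M[R]_nu).

Definition Epath (k : nat) (i : 'I_nu) (g : seq 'I_nu -> R) : R :=
  \sum_(t : k.-tuple 'I_nu) pathprob P i t * g t.

Lemma Epath0 i g : Epath 0 i g = g [::].
Proof.
rewrite /Epath (big_pred1 [tuple]) /= ?mul1r // => t.
by rewrite [t]tuple0; apply/esym/eqP.
Qed.

Lemma EpathS k i g : Epath k.+1 i g = \sum_j P i j * Epath k j (fun t => g (j :: t)).
Proof.
rewrite /Epath (reindex (fun p : 'I_nu * k.-tuple 'I_nu => [tuple of p.1 :: p.2])) /=.
  rewrite -(pair_bigA _ (fun j (t : k.-tuple 'I_nu) =>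
                            pathprob P i [tuple of j :: t] * g (j :: t))).
  apply: eq_bigr => j _; rewrite big_distrr /=.
  by apply: eq_bigr => t _; rewrite mulrA.
exists (fun t : k.+1.-tuple 'I_nu => (thead t, [tuple of behead t])).
  by move=> [j t] _ /=; congr pair; apply: val_inj.
by move=> t _; rewrite [RHS]tuple_eta.
Qed.

Lemma EpathD k i g g' : Epath k i (fun s => g s + g' s) = Epath k i g + Epath k i g'.
Proof. by rewrite /Epath -big_split /=; apply: eq_bigr => t _; rewrite mulrDr. Qed.

Lemma pathprob_rcons i s b : pathprob P i (rcons s b) = pathprob P i s * P (last i s) b.
Proof. by elim: s i => [|j s IH] i /=; rewrite ?mul1r ?mulr1 // IH mulrA. Qed.

Lemma Epath_last2 k i (h : 'I_nu -> 'I_nu -> R) :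
  Epath k.+1 i (fun s => h (last i (take k s)) (last i s)) =
  \sum_a \sum_b (P ^+ k) i a * P a b * h a b.
Proof.
elim: k i => [|k IH] i.
  rewrite EpathS expr0; under eq_bigr do rewrite Epath0 /=.
  rewrite [RHS](bigD1 i) //= [X in _ + X]big1 ?addr0.
    by apply: eq_bigr => b _; rewrite mxE eqxx mul1r.
  move=> a /negbTE ha; apply: big1 => b _.
  by rewrite mxE eq_sym ha !mul0r.
rewrite EpathS; under eq_bigr do rewrite /= IH.
rewrite exprS -mulmxE.
under [RHS]eq_bigr do under eq_bigr do rewrite mxE !big_distrl /=.
under [RHS]eq_bigr do rewrite exchange_big /=.
rewrite [RHS]exchange_big /=; apply: eq_bigr => j _.
rewrite big_distrr /=; apply: eq_bigr => a _.
by rewrite big_distrr /=; apply: eq_bigr => b _; rewrite !mulrA.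
Qed.

Hypothesis sP : stochastic P.

Lemma pathprob_ge0 i s : 0 <= pathprob P i s.
Proof. by elim: s i => [|j s IH] i /=; [exact: ler01 | exact: mulr_ge0 (sP.1 _ _) (IH _)]. Qed.

Lemma pathprob_rcons_gt0 i s b : 0 < pathprob P i (rcons s b) -> 0 < pathprob P i s.
Proof.
rewrite pathprob_rcons; have := pathprob_ge0 i s.
by rewrite le0r => /predU1P[->|//]; rewrite mul0r ltxx.
Qed.

Lemma eq_Epath k i g g' :
  (forall s, size s = k -> 0 < pathprob P i s -> g s = g' s) ->
  Epath k i g = Epath k i g'.
Proof.
move=> gg'; apply: eq_bigr => t _.
have := pathprob_ge0 i t; rewrite le0r => /predU1P[->|pos]; first by rewrite !mul0r.
by rewrite gg' ?size_tuple.
Qed.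

Lemma Epath_cst k i c : Epath k i (fun _ => c) = c.
Proof.
elim: k i => [|k IH] i; first by rewrite Epath0.
rewrite EpathS; under eq_bigr do rewrite IH.
by rewrite -big_distrl /= sP.2 mul1r.
Qed.

Lemma Epath_rcons k i g g' :
  (forall s b, size s = k -> g (rcons s b) = g' s) -> Epath k.+1 i g = Epath k i g'.
Proof.
elim: k i g g' => [|k IH] i g g' gg'.
  rewrite EpathS Epath0; under eq_bigr do rewrite Epath0 (gg' [::]) //.
  by rewrite -big_distrl /= sP.2 mul1r.
rewrite EpathS [RHS]EpathS; apply: eq_bigr => j _; congr (_ * _).
by apply: IH => s b s_k; rewrite (gg' (j :: s)) //= s_k.
Qed.

End PathExpectation.

Section Trajectories.
Variables (R : realType) (n m nu : nat).
Variable f : 'rV[R]_n -> 'rV[R]_m -> 'I_nu -> 'rV[R]_n.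

Lemma stt_rcons (w : policy R m nu) pre y h a :
  stt f w pre y (rcons h a) = f (stt f w pre y h) (w (pre ++ rcons h a)) a.
Proof.
elim: h pre y => [|c h IH] pre y /=; first by rewrite cats1.
by rewrite IH cat_rcons.
Qed.

Lemma stt_shift (u v : policy R m nu) th N :
  (forall h, (size h <= N)%N -> v h = u (th :: h)) ->
  forall pre y h, (size pre + size h <= N)%N -> stt f v pre y h = stt f u (th :: pre) y h.
Proof.
move=> vu pre y h; elim: h pre y => [|a h IH] pre y //= hN.
rewrite vu ?IH ?size_rcons ?addSn -?addnS //.
by apply: leq_trans hN; rewrite addnS ltnS leq_addr.
Qed.

Lemma xk_rcons (w : policy R m nu) y s b k :
  (k <= size s)%N -> xk f w y (rcons s b) k = xk f w y s k.
Proof. by move=> ks; rewrite /xk -cats1 takel_cat. Qed.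

Lemma uk_rcons (w : policy R m nu) s b k :
  (k < size s)%N -> uk w (rcons s b) k = uk w s k.
Proof. by move=> ks; rewrite /uk -cats1 takel_cat. Qed.

End Trajectories.

Section OptimalValue.
Variables (R : realType) (n m nu N : nat) (P : 'M[R]_nu).
Variables (f : 'rV[R]_n -> 'rV[R]_m -> 'I_nu -> 'rV[R]_n) (l : 'rV[R]_n -> 'rV[R]_m -> 'I_nu -> R).
Variables (Y : 'I_nu -> set ('rV[R]_n * 'rV[R]_m)) (bet : 'I_nu -> 'I_nu) (xs : 'I_nu -> 'rV[R]_n).
Hypothesis sP : stochastic P.
Hypothesis l_ge0 : forall x u th, 0 <= l x u th.

Lemma cost_ge0 x th u : 0 <= cost N P f l x th u.
Proof.
apply: sumr_ge0 => t _; apply: mulr_ge0; first exact: pathprob_ge0.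
by apply: sumr_ge0 => k _; exact: l_ge0.
Qed.

Lemma VN_le_cost x th u :
  feasible N P f Y bet xs x th u -> VN N P f l Y bet xs x th <= cost N P f l x th u.
Proof.
move=> u_feas; apply: ge_inf; last by exists u.
by exists 0 => _ [w _ <-]; exact: cost_ge0.
Qed.

End OptimalValue.

Section ShiftedPolicy.
Variables (R : realType) (n m nu N : nat).
Variables (P : 'M[R]_nu) (f : 'rV[R]_n -> 'rV[R]_m -> 'I_nu -> 'rV[R]_n).
Variables (l : 'rV[R]_n -> 'rV[R]_m -> 'I_nu -> R) (Y : 'I_nu -> set ('rV[R]_n * 'rV[R]_m)).
Variables (bet : 'I_nu -> 'I_nu) (xs : 'I_nu -> 'rV[R]_n) (ubar : 'I_nu -> 'I_nu -> 'rV[R]_m).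
Variables (th : 'I_nu) (x : 'rV[R]_n) (u : policy R m nu).

Let xp := f x (u [:: th]) th.

Definition shift_policy : policy R m nu := fun h =>
  if (size h <= N)%N then u (th :: h) else ubar (bet (last th (take N h))) (last th h).

Lemma shift_policyE h : (size h <= N)%N -> shift_policy h = u (th :: h).
Proof. by rewrite /shift_policy => ->. Qed.

Lemma xk_shift_policy h k : (k <= N)%N -> xk f shift_policy xp h k = xk f u x (th :: h) k.+1.
Proof.
move=> kN; rewrite /xk (stt_shift f shift_policyE) //.
by rewrite size_take_min (leq_trans (geq_minl _ _)).
Qed.

Lemma uk_shift_policy h k : (k < N)%N -> uk shift_policy h k = uk u (th :: h) k.+1.
Proof. by move=> kN; rewrite /uk shift_policyE // size_take_min (leq_trans (geq_minl _ _)). Qed.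

Lemma uk_shift_policy_last s b : size s = N ->
  uk shift_policy (rcons s b) N = ubar (bet (last th s)) b.
Proof.
move=> sN; rewrite /uk take_oversize ?size_rcons ?sN // /shift_policy size_rcons sN ltnn.
by rewrite -cats1 take_size_cat // last_cat.
Qed.

Lemma xk_shift_policy_last s b : size s = N ->
  xk f shift_policy xp (rcons s b) N.+1 =
  f (xk f u x (th :: s) N.+1) (ubar (bet (last th s)) b) b.
Proof.
move=> sN; rewrite -(xk_shift_policy s (leqnn N)) -(uk_shift_policy_last b sN).
by rewrite /xk /uk !take_oversize ?size_rcons ?sN // stt_rcons.
Qed.

Hypothesis sP : stochastic P.
Hypothesis ctrl : controllable f Y bet xs ubar.
Hypothesis u_feas : feasible N.+1 P f Y bet xs x th u.

Let u_feas_path s : size s = N -> 0 < pathprob P th s ->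
  (forall k, (k < N.+1)%N ->
     Y (nth th (th :: s) k) (xk f u x (th :: s) k, uk u (th :: s) k)) /\
  xk f u x (th :: s) N.+1 = xs (bet (last th s)).
Proof. by move=> sN; exact: (@u_feas (Tuple (introT eqP sN))). Qed.

Lemma shift_policy_feasible_path s : size s = N.+1 -> 0 < pathprob P th s ->
  (forall k, (k < N.+1)%N -> Y (nth th s k) (xk f shift_policy xp s k, uk shift_policy s k)) /\
  xk f shift_policy xp s N.+1 = xs (bet (last th s)).
Proof.
case/lastP: s => [//|s b]; rewrite size_rcons => -[sN] pos.
have [u_Y u_end] := u_feas_path sN (pathprob_rcons_gt0 sP pos).
split; last by rewrite xk_shift_policy_last // u_end last_rcons; exact: (ctrl _ _).2.
move=> k; rewrite ltnS leq_eqVlt nth_rcons sN => /predU1P[->|kN].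
  rewrite ltnn eqxx xk_rcons ?sN // xk_shift_policy // u_end uk_shift_policy_last //.
  exact: (ctrl _ _).1.
have kN' := ltnW kN.
by rewrite kN xk_rcons ?uk_rcons ?sN // xk_shift_policy // uk_shift_policy //; exact: u_Y k.+1 kN.
Qed.

Lemma shift_policy_feasible j : 0 < P th j -> feasible N.+1 P f Y bet xs xp j shift_policy.
Proof.
move=> Pj t t_pos; have /= := @shift_policy_feasible_path (j :: t).
rewrite size_tuple => /(_ erefl (mulr_gt0 Pj t_pos))[v_Y v_end]; split=> // k kN.
by rewrite (set_nth_default th) ?size_tuple //; exact: v_Y.
Qed.

Lemma shift_policy_cost :
  \sum_j P th j * cost N.+1 P f l xp j shift_policy =
  cost N.+1 P f l x th u - l x (u [:: th]) th + lN N.+1 P l bet xs ubar th.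
Proof.
pose tail s := \sum_(k < N) l (xk f u x (th :: s) k.+1) (uk u (th :: s) k.+1) (nth th s k).
pose terminal a b := l (xs (bet a)) (ubar (bet a) b) b.
have -> : cost N.+1 P f l x th u = Epath P N th (fun s => l x (u [:: th]) th + tail s).
  by apply: eq_bigr => s _ /=; rewrite big_ord_recl /uk /= take0.
have -> : \sum_j P th j * cost N.+1 P f l xp j shift_policy =
          Epath P N.+1 th (fun s => tail (take N s) + terminal (last th (take N s)) (last th s)).
  transitivity (Epath P N.+1 th (fun s => \sum_(k < N.+1)
     l (xk f shift_policy xp s k) (uk shift_policy s k) (nth (head th s) s k))).
    by rewrite EpathS.
  apply: eq_Epath => // s; case/lastP: s => [//|s b]; rewrite size_rcons => -[sN] pos.
  have [_ u_end] := u_feas_path sN (pathprob_rcons_gt0 sP pos).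
  have take_s : take N (rcons s b) = s by rewrite -cats1 take_size_cat.
  rewrite take_s last_rcons big_ord_recr /= nth_rcons sN ltnn eqxx.
  rewrite xk_rcons ?sN // xk_shift_policy // u_end uk_shift_policy_last //; congr (_ + _).
  apply: eq_bigr => k _; have kN := ltn_ord k; have kN' := ltnW kN.
  rewrite nth_rcons sN kN (set_nth_default th) ?sN //.
  by rewrite xk_rcons ?uk_rcons ?sN // xk_shift_policy // uk_shift_policy.
rewrite !EpathD Epath_cst // (@Epath_rcons _ _ _ sP N th _ tail) ?Epath_last2; last first.
  by move=> s b sN; rewrite -cats1 take_size_cat.
by rewrite [l x _ _ + _]addrC addrK.
Qed.

Hypothesis l_ge0 : forall x u th, 0 <= l x u th.

Lemma sum_VN_shift_le :
  \sum_j P th j * VN N.+1 P f l Y bet xs xp j <=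
  cost N.+1 P f l x th u - l x (u [:: th]) th + lN N.+1 P l bet xs ubar th.
Proof.
rewrite -shift_policy_cost; apply: ler_sum => j _.
have [->|Pj] := eqVneq (P th j) 0; first by rewrite !mul0r.
have Pj_gt0 : 0 < P th j by rewrite lt0r Pj sP.1.
by rewrite ler_pM2l //; apply: VN_le_cost => //; exact: shift_policy_feasible.
Qed.

End ShiftedPolicy.


Theorem lemma1 (R : realType) (n m nu N : nat)
  (P : 'M[R]_nu) (f : 'rV[R]_n -> 'rV[R]_m -> 'I_nu -> 'rV[R]_n)
  (l : 'rV[R]_n -> 'rV[R]_m -> 'I_nu -> R) (Y : 'I_nu -> set ('rV[R]_n * 'rV[R]_m))
  (bet : 'I_nu -> 'I_nu) (xs : 'I_nu -> 'rV[R]_n) (us : 'I_nu -> 'rV[R]_m)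
  (ubar : 'I_nu -> 'I_nu -> 'rV[R]_m) (kappa : 'rV[R]_n -> 'I_nu -> 'rV[R]_m) :
  (0 < N)%N ->
  stochastic P -> is_bet P bet ->
  well_posed P f l Y ->
  optimal_steady_states f l Y xs us ->
  controllable f Y bet xs ubar ->
  is_mpc_law N P f l Y bet xs kappa ->
  forall (x : 'rV[R]_n) (th : 'I_nu), XN N P f Y bet xs (x, th) ->
    LVN N P f l Y bet xs kappa x th <= lN N P l bet xs ubar th - l x (kappa x th) th.
Proof.
case: N => [//|N] _ sP _ [wp _ _] _ ctrl mpc x th /mpc[u [u_feas u_opt u_kappa]].
have l_ge0 x' u' th' : 0 <= l x' u' th' by have [ge0 _ _ _ _] := wp th'; exact: ge0.
rewrite /LVN u_kappa; under eq_bigr do rewrite mulrBr.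
rewrite sumrB -big_distrl /= sP.2 mul1r -u_opt.
have := sum_VN_shift_le sP ctrl u_feas l_ge0; lra.
Qed.
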